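(* Let $P,P'\in\mathcal D$ and $e,e'\in\mathcal E$. If $P\sqsubseteq P'$ then $\mathrm{da}(P,e)\le\mathrm{da}(P',e)$, and if $e\sqsubseteq e'$ then $\mathrm{da}(P,e)\le\mathrm{da}(P,e')$.
   Context: Let $\mathcal V$ be a countably infinite set of variables. $\mathcal M$ is the set of maps $m:\mathcal V\to\mathbb N\cup\{\infty\}$, ordered pointwise. $\mathcal P$ is the set of discrete probability distributions on $\mathcal M$. For a subdistribution $\pi$ on $\mathcal M$ with total mass $|\pi|$, its weighting is $\overline\pi(x)=\frac1{|\pi|}\sum_m\pi(m)m(x)$ if $|\pi|>0$, and $\overline\pi(x)=0$ otherwise. For $p_1,p_2\in\mathcal P$: $p_1\sqsubseteq p_2$ iff there is a coupling $\omega$ of $p_1,p_2$ with $\overline{\omega(\cdot,m)}\le m$ pointwise for all $m\in\mathcal M$, where $\omega(\cdot,m)$ is the subdistribution $m'\mapsto\omega(m',m)$. For $P\subseteq\mathcal P$, $\downarrow P=\{p\mid p\sqsubseteq p'\text{ for some }p'\in P\}$. $\mathcal D=\{P\subseteq\mathcal P\mid P\ne\emptyset,\ \downarrow P=P\}$, ordered by $P_1\sqsubseteq P_2$ iff every $p_1\in P_1$ has some $p_2\in P_2$ with $p_1\sqsubseteq p_2$. $\mathcal E$ is the set of maps $e:\mathcal V\to[0,1)$, ordered pointwise. $\mathrm{dda}(m,e)=1-\prod_{x\in\mathcal V}(1-e(x))^{m(x)}$ (with $c^\infty=0$ for $0\le c<1$ and $1^\infty=1$), $\mathrm{pda}(p,e)=\sum_{m\in\mathcal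 M}p(m)\,\mathrm{dda}(m,e)$, and $\mathrm{da}(P,e)=\sup_{p\in P}\mathrm{pda}(p,e)$. *)

From Stdlib Require Import Reals List ClassicalEpsilon.
Open Scope R_scope.

Definition Var := nat.

Inductive natinf : Type := NFin (n : nat) | NInf.

Definition Mem := Var -> natinf.

(* Supremum of a set of reals (meaningful when nonempty and bounded above). *)
Definition Rsup (E : R -> Prop) : R := epsilon (inhabits 0) (fun s => is_lub E s).

Fixpoint fsum {A : Type} (f : A -> R) (l : list A) : R :=
  match l with nil => 0 | a :: l' => f a + fsum f l' end.

Definition fin_sums {A : Type} (f : A -> R) : R -> Prop :=
  fun s => exists l, NoDup l /\ s = fsum f l.

Definition has_sum {A : Type} (f : A -> R) (s : R) : Prop :=
  (forall a, 0 <= f a) /\ is_lub (fin_sums f) s.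

Definition tsum {A : Type} (f : A -> R) : R := Rsup (fin_sums f).

(* Discrete probability distribution (countable support follows from summability). *)
Definition is_dist {A : Type} (p : A -> R) : Prop := has_sum p 1.

Inductive ER : Type := EFin (r : R) | EInf.

Definition esum {A : Type} (g : A -> ER) : ER :=
  if excluded_middle_informative (exists a, g a = EInf) then EInf
  else
    let h := fun a => match g a with EFin r => r | EInf => 0 end in
    if excluded_middle_informative (bound (fin_sums h)) then EFin (tsum h) else EInf.

(* the term pi(m) * m(x), with the convention 0 * ∞ = 0 *)
Definition wterm (pi : Mem -> R) (x : Var) (m : Mem) : ER :=
  match m x with
  | NFin k => EFin (pi m * INR k)
  | NInf => if Req_EM_T (pi m) 0 then EFin 0 else EInf
  end.

Definition weighting (pi : Mem -> R) (x : Var) : ER :=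
  if Rlt_dec 0 (tsum pi) then
    match esum (wterm pi x) with
    | EFin r => EFin (r / tsum pi)
    | EInf => EInf
    end
  else EFin 0.

Definition ER_le_natinf (w : ER) (n : natinf) : Prop :=
  match n with
  | NInf => True
  | NFin k => match w with EFin r => r <= INR k | EInf => False end
  end.

Definition coupling (w : Mem * Mem -> R) (p1 p2 : Mem -> R) : Prop :=
  is_dist w /\
  (forall m1, has_sum (fun m2 => w (m1, m2)) (p1 m1)) /\
  (forall m2, has_sum (fun m1 => w (m1, m2)) (p2 m2)).

Definition dist_le (p1 p2 : Mem -> R) : Prop :=
  is_dist p1 /\ is_dist p2 /\
  exists w, coupling w p1 p2 /\
    forall (m : Mem) (x : Var), ER_le_natinf (weighting (fun m' => w (m', m)) x) (m x).

Definition down (P : (Mem -> R) -> Prop) : (Mem -> R) -> Prop :=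
  fun p => exists p', P p' /\ dist_le p p'.

Definition in_D (P : (Mem -> R) -> Prop) : Prop :=
  (exists p, P p) /\ (forall p, down P p <-> P p).

Definition D_le (P1 P2 : (Mem -> R) -> Prop) : Prop :=
  forall p1, P1 p1 -> exists p2, P2 p2 /\ dist_le p1 p2.

Definition in_E (e : Var -> R) : Prop := forall x, 0 <= e x < 1.
Definition E_le (e e' : Var -> R) : Prop := forall x, e x <= e' x.

(* factor (1 - e(x))^(m(x)), with c^∞ = 0 for c < 1 and 1^∞ = 1 *)
Definition factor (m : Mem) (e : Var -> R) (x : Var) : R :=
  match m x with
  | NFin k => (1 - e x) ^ k
  | NInf => if Req_EM_T (e x) 0 then 1 else 0
  end.

Fixpoint pprod (f : nat -> R) (n : nat) : R :=
  match n with O => 1 | S n' => pprod f n' * f n' end.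

Definition infprod (f : nat -> R) : R :=
  epsilon (inhabits 0) (fun l => Un_cv (pprod f) l).

Definition dda (m : Mem) (e : Var -> R) : R := 1 - infprod (factor m e).
Definition pda (p : Mem -> R) (e : Var -> R) : R := tsum (fun m => p m * dda m e).
Definition da (P : (Mem -> R) -> Prop) (e : Var -> R) : R :=
  Rsup (fun r => exists p, P p /\ r = pda p e).

From Stdlib Require Import Reals List ClassicalEpsilon Classical Lra Lia.
Open Scope R_scope.

(* Monotonicity in [e] is pointwise: every factor [(1 - e x) ^ m x] shrinks as [e] grows.
   For monotonicity in [P] it suffices that [p ⊑ p'] implies [pda p e <= pda p' e].  Split the
   sum defining [pda p e] along the columns of a coupling [w] witnessing [p ⊑ p']: the column
   [w (_, m)] has mass [p' m] and weighting at most [m], and we show that its contribution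
   [Σ_m1 w (m1, m) dda m1 e] is at most [p' m * dda m e].  Writing the partial products as
   [exp (- Σ_x hazard e x * m x)], this is Jensen's inequality for the convex map [exp (- _)]
   (the column mean of [m1 x] is at most [m x]), and it passes to the limit of the products. *)

Definition classic_eq_dec {T : Type} (x y : T) : {x = y} + {x <> y} :=
  excluded_middle_informative (x = y).

Section FiniteSums.
Context {A : Type}.
Implicit Types (f g : A -> R) (l : list A).

Lemma fsum_app f l1 l2 : fsum f (l1 ++ l2) = fsum f l1 + fsum f l2.
Proof. induction l1 as [|a l1 IH]; simpl; [lra | rewrite IH; lra]. Qed.

Lemma fsum_ext f g l : (forall a, In a l -> f a = g a) -> fsum f l = fsum g l.
Proof.
  induction l as [|a l IH]; simpl; intros H; [reflexivity|].
  rewrite H, IH; auto.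
Qed.

Lemma fsum_le f g l : (forall a, In a l -> f a <= g a) -> fsum f l <= fsum g l.
Proof.
  induction l as [|a l IH]; simpl; intros H; [lra|].
  apply Rplus_le_compat; auto.
Qed.

Lemma fsum_0 l : fsum (fun _ : A => 0) l = 0.
Proof. induction l as [|a l IH]; simpl; [reflexivity | rewrite IH; lra]. Qed.

Lemma fsum_nonneg f l : (forall a, In a l -> 0 <= f a) -> 0 <= fsum f l.
Proof. intros H. rewrite <- (fsum_0 l). apply fsum_le; auto. Qed.

Lemma fsum_scal f c l : fsum (fun a => c * f a) l = c * fsum f l.
Proof. induction l as [|a l IH]; simpl; [lra | rewrite IH; lra]. Qed.

Lemma fsum_plus f g l : fsum (fun a => f a + g a) l = fsum f l + fsum g l.
Proof. induction l as [|a l IH]; simpl; [lra | rewrite IH; lra]. Qed.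

Lemma fsum_minus f g l : fsum (fun a => f a - g a) l = fsum f l - fsum g l.
Proof. induction l as [|a l IH]; simpl; [lra | rewrite IH; lra]. Qed.

Lemma fsum_remove_le f l a : (forall b, 0 <= f b) -> In a l ->
  f a + fsum f (remove classic_eq_dec a l) <= fsum f l.
Proof.
  intros Hf; induction l as [|b l IH]; simpl; [tauto|]; intros Hin.
  destruct (classic_eq_dec a b) as [<-|Hab].
  - assert (fsum f (remove classic_eq_dec a l) <= fsum f l); [|lra].
    clear IH Hin; induction l as [|b l IH]; simpl; [lra|].
    destruct (classic_eq_dec a b); simpl; pose proof (Hf b); lra.
  - destruct Hin as [->|Hin]; [congruence|].
    simpl; specialize (IH Hin); lra.
Qed.

Lemma fsum_le_incl f l l' : (forall b, 0 <= f b) -> NoDup l -> incl l l' ->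
  fsum f l <= fsum f l'.
Proof.
  intros Hf Hl; revert l'; induction Hl as [|a l Ha Hl IH]; simpl; intros l' Hi.
  - apply fsum_nonneg; auto.
  - assert (Hin : In a l') by (apply Hi; left; reflexivity).
    pose proof (fsum_remove_le f l' a Hf Hin).
    assert (fsum f l <= fsum f (remove classic_eq_dec a l')); [|lra].
    apply IH; intros b Hb. apply in_in_remove.
    + intros ->; contradiction.
    + apply Hi; right; exact Hb.
Qed.

End FiniteSums.

Lemma fsum_comm {A B : Type} (h : A -> B -> R) la lb :
  fsum (fun a => fsum (h a) lb) la = fsum (fun b => fsum (fun a => h a b) la) lb.
Proof.
  induction la as [|a la IH]; simpl.
  - rewrite fsum_0; reflexivity.
  - rewrite IH, <- fsum_plus; reflexivity.
Qed.

Lemma Rsup_is_lub (E : R -> Prop) : bound E -> (exists x, E x) -> is_lub E (Rsup E).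
Proof.
  intros Hb Hne. unfold Rsup; apply epsilon_spec.
  destruct (completeness E Hb Hne) as [s Hs]; eauto.
Qed.

Lemma is_lub_le_of_dominated (E E' : R -> Prop) s s' :
  is_lub E s -> is_lub E' s' -> (forall x, E x -> exists y, E' y /\ x <= y) -> s <= s'.
Proof.
  intros [_ Hleast] [Hub _] Hdom. apply Hleast; intros x Hx.
  destruct (Hdom x Hx) as [y [Hy Hxy]]. specialize (Hub y Hy); lra.
Qed.

Section Summability.
Context {A : Type}.
Implicit Types (f g : A -> R) (l : list A).

Lemma has_sum_fsum_le f s l : has_sum f s -> NoDup l -> fsum f l <= s.
Proof. intros [_ [Hub _]] Hl. apply Hub; exists l; auto. Qed.

Lemma has_sum_le f s B : has_sum f s -> (forall l, NoDup l -> fsum f l <= B) -> s <= B.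
Proof. intros [_ [_ Hleast]] HB. apply Hleast; intros x [l [Hl ->]]; auto. Qed.

Lemma has_sum_nonneg f s : has_sum f s -> 0 <= s.
Proof. intros H. apply (has_sum_fsum_le f s nil H); constructor. Qed.

Lemma has_sum_term_le f s a : has_sum f s -> f a <= s.
Proof.
  intros H. pose proof (has_sum_fsum_le f s (a :: nil) H) as Ha; simpl in Ha.
  assert (f a + 0 <= s) by (apply Ha; repeat constructor; auto). lra.
Qed.

Lemma tsum_is_lub f : bound (fin_sums f) -> is_lub (fin_sums f) (tsum f).
Proof. intros Hb. apply Rsup_is_lub; [exact Hb | exists 0, nil; split; [constructor | reflexivity]]. Qed.

Lemma tsum_eq_of_has_sum f s : has_sum f s -> tsum f = s.
Proof.
  intros Hs. apply (is_lub_u (fin_sums f)); [|apply Hs].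
  apply tsum_is_lub; exists s; apply Hs.
Qed.

Lemma has_sum_tsum f B : (forall a, 0 <= f a) -> (forall l, NoDup l -> fsum f l <= B) ->
  has_sum f (tsum f).
Proof.
  intros Hf HB. split; [exact Hf|]. apply tsum_is_lub.
  exists B; intros x [l [Hl ->]]; auto.
Qed.

Lemma has_sum_0 : has_sum (fun _ : A => 0) 0.
Proof.
  split; [intros; lra|]. split.
  - intros x [l [_ ->]]; rewrite fsum_0; lra.
  - intros B HB. apply HB; exists nil; split; [constructor | reflexivity].
Qed.

Lemma has_sum_scal f s c : 0 <= c -> has_sum f s -> has_sum (fun a => c * f a) (c * s).
Proof.
  intros Hc Hs. pose proof (proj1 Hs) as Hf. split; [intros a; specialize (Hf a); nra|]. split.
  - intros x [l [Hl ->]]. rewrite fsum_scal.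
    apply Rmult_le_compat_l; [lra | apply (has_sum_fsum_le f s l Hs Hl)].
  - intros B HB.
    assert (HB0 : 0 <= B) by (apply HB; exists nil; split; [constructor | reflexivity]).
    destruct (Req_dec c 0) as [->|Hc0]; [lra|].
    assert (Hs' : s <= B / c).
    { apply (has_sum_le f s (B / c) Hs); intros l Hl.
      assert (c * fsum f l <= B) by (rewrite <- fsum_scal; apply HB; exists l; auto).
      apply Rmult_le_reg_l with c; [lra|].
      replace (c * (B / c)) with B by (field; lra); lra. }
    replace B with (c * (B / c)) by (field; lra).
    apply Rmult_le_compat_l; lra.
Qed.

Lemma has_sum_plus f g s u : has_sum f s -> has_sum g u -> has_sum (fun a => f a + g a) (s + u).
Proof.
  intros Hs Hu. pose proof (proj1 Hs) as Hf; pose proof (proj1 Hu) as Hg.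
  split; [intros a; specialize (Hf a); specialize (Hg a); lra|]. split.
  - intros x [l [Hl ->]]. rewrite fsum_plus.
    pose proof (has_sum_fsum_le f s l Hs Hl); pose proof (has_sum_fsum_le g u l Hu Hl); lra.
  - intros B HB.
    assert (Hsplit : forall l1 l2, NoDup l1 -> NoDup l2 -> fsum f l1 + fsum g l2 <= B).
    { intros l1 l2 H1 H2. set (l := nodup classic_eq_dec (l1 ++ l2)).
      assert (Hincl : forall l0, incl l0 (l1 ++ l2) -> incl l0 l)
        by (intros l0 H0 x Hx; apply nodup_In; auto).
      assert (fsum f l1 <= fsum f l) by (apply fsum_le_incl, Hincl, incl_appl, incl_refl; auto).
      assert (fsum g l2 <= fsum g l) by (apply fsum_le_incl, Hincl, incl_appr, incl_refl; auto).
      assert (fsum (fun a => f a + g a) l <= B) by (apply HB; exists l; split; [apply NoDup_nodup | reflexivity]).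
      rewrite fsum_plus in *; lra. }
    assert (Hu' : u <= B - s).
    { apply (has_sum_le g u _ Hu); intros l2 H2.
      assert (s <= B - fsum g l2); [|lra].
      apply (has_sum_le f s _ Hs); intros l1 H1. specialize (Hsplit l1 l2 H1 H2); lra. }
    lra.
Qed.

End Summability.

Lemma has_sum_fsum {A B : Type} (h : B -> A -> R) (s : B -> R) (lb : list B) :
  (forall b, has_sum (h b) (s b)) ->
  has_sum (fun a => fsum (fun b => h b a) lb) (fsum s lb).
Proof.
  intros Hh. induction lb as [|b lb IH]; simpl.
  - apply has_sum_0.
  - apply has_sum_plus; auto.
Qed.

Lemma Un_cv_const (a : R) : Un_cv (fun _ => a) a.
Proof. intros eps Heps; exists 0%nat; intros n _; unfold Rdist; rewrite Rminus_diag, Rabs_R0; exact Heps. Qed.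

Section PartialProducts.
Variable f : nat -> R.
Hypothesis f_range : forall x, 0 <= f x <= 1.

Lemma pprod_range n : 0 <= pprod f n <= 1.
Proof. induction n as [|n IH]; simpl; [lra|]. specialize (f_range n). nra. Qed.

Lemma pprod_decreasing : Un_decreasing (pprod f).
Proof. intros n; simpl. pose proof (pprod_range n); specialize (f_range n). nra. Qed.

Lemma infprod_cv : Un_cv (pprod f) (infprod f).
Proof.
  unfold infprod; apply epsilon_spec.
  destruct (decreasing_cv (pprod f) pprod_decreasing) as [l Hl]; [|eauto].
  exists 0; intros x [n ->]; unfold opp_seq. pose proof (pprod_range n); lra.
Qed.

Lemma infprod_range n : 0 <= infprod f <= pprod f n.
Proof.
  split.
  - apply Rle_cv_lim with (Un := fun _ => 0) (Vn := pprod f); [|apply Un_cv_const | apply infprod_cv].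
    intros k; apply pprod_range.
  - apply decreasing_ineq; [apply pprod_decreasing | apply infprod_cv].
Qed.

End PartialProducts.

Lemma pprod_zero f N x : (x < N)%nat -> f x = 0 -> pprod f N = 0.
Proof.
  intros Hx Hf. induction N as [|N IH]; [lia|]. simpl.
  destruct (Nat.eq_dec x N) as [->|]; [rewrite Hf; ring | rewrite IH by lia; ring].
Qed.

Lemma infprod_le f g : (forall x, 0 <= f x <= g x) -> (forall x, g x <= 1) ->
  infprod f <= infprod g.
Proof.
  intros Hfg Hg.
  assert (Hf1 : forall x, 0 <= f x <= 1) by (intros x; specialize (Hfg x); specialize (Hg x); lra).
  assert (Hg1 : forall x, 0 <= g x <= 1) by (intros x; specialize (Hfg x); specialize (Hg x); lra).
  apply Rle_cv_lim with (Un := pprod f) (Vn := pprod g); [|apply infprod_cv; auto ..].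
  induction n as [|n IH]; simpl; [lra|].
  apply Rmult_le_compat; [apply pprod_range; auto | apply Hfg | exact IH | apply Hfg].
Qed.

Lemma factor_range m e x : in_E e -> 0 <= factor m e x <= 1.
Proof.
  intros He; specialize (He x); unfold factor. destruct (m x) as [k|].
  - split; [apply pow_le; lra|].
    rewrite <- (pow1 k) at 2. apply pow_incr; lra.
  - destruct (Req_EM_T (e x) 0); lra.
Qed.

Lemma factor_antitone m e e' x : in_E e -> in_E e' -> E_le e e' ->
  factor m e' x <= factor m e x.
Proof.
  intros He He' Hle; specialize (He x); specialize (He' x); specialize (Hle x).
  unfold factor; destruct (m x).
  - apply pow_incr; lra.
  - destruct (Req_EM_T (e' x) 0), (Req_EM_T (e x) 0); lra.
Qed.

Lemma infprod_factor_cv m e : in_E e -> Un_cv (pprod (factor m e)) (infprod (factor m e)).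
Proof. intros He; apply infprod_cv; intros x; apply factor_range, He. Qed.

Lemma dda_range m e : in_E e -> 0 <= dda m e <= 1.
Proof.
  intros He. pose proof (infprod_range (factor m e) (fun x => factor_range m e x He) 0).
  simpl in *; unfold dda; lra.
Qed.

Lemma dda_monotone m e e' : in_E e -> in_E e' -> E_le e e' -> dda m e <= dda m e'.
Proof.
  intros He He' Hle; unfold dda.
  enough (infprod (factor m e') <= infprod (factor m e)) by lra.
  apply infprod_le.
  - intros x; split; [apply factor_range, He' | apply factor_antitone; auto].
  - intros x; apply factor_range, He.
Qed.

Definition count (m : Mem) (x : Var) : R :=
  match m x with NFin k => INR k | NInf => 0 end.

(* [(1 - e x) ^ k = exp (- hazard e x * k)]: partial products become exponentials of sums. *)
Definition hazard (e : Var -> R) (x : Var) : R := - ln (1 - e x).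

Lemma hazard_0 e x : e x = 0 -> hazard e x = 0.
Proof. intros H; unfold hazard; rewrite H, Rminus_0_r, ln_1; lra. Qed.

Lemma hazard_nonneg e x : in_E e -> 0 <= hazard e x.
Proof.
  intros He; destruct (Req_dec (e x) 0) as [H0|H0]; [rewrite hazard_0; lra|].
  specialize (He x); unfold hazard.
  enough (ln (1 - e x) < ln 1) by (rewrite ln_1 in *; lra).
  apply ln_increasing; lra.
Qed.

Lemma factor_exp m e x : in_E e -> (0 < e x -> m x <> NInf) ->
  factor m e x = exp (- (hazard e x * count m x)).
Proof.
  intros He Hfin; pose proof (He x) as Hx; unfold factor, count.
  destruct (m x) eqn:Em.
  - rewrite <- Rpower_pow by lra; unfold Rpower, hazard. f_equal; ring.
  - destruct (Req_EM_T (e x) 0) as [H0|H0]; [|exfalso; apply Hfin; [lra | reflexivity]].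
    rewrite hazard_0, Rmult_0_l, Ropp_0, exp_0 by exact H0; reflexivity.
Qed.

Definition total_hazard (e : Var -> R) (m : Mem) (N : nat) : R :=
  fsum (fun x => hazard e x * count m x) (seq 0 N).

Lemma pprod_factor_exp m e N : in_E e -> (forall x, (x < N)%nat -> 0 < e x -> m x <> NInf) ->
  pprod (factor m e) N = exp (- total_hazard e m N).
Proof.
  intros He; unfold total_hazard; induction N as [|N IH]; intros Hfin.
  - simpl; rewrite Ropp_0, exp_0; reflexivity.
  - rewrite seq_S, fsum_app; simpl pprod; simpl fsum.
    rewrite IH, factor_exp by (auto; intros; apply Hfin; lia).
    rewrite <- exp_plus; f_equal; ring.
Qed.

Lemma exp_tangent s a : exp (- s) * (1 + s - a) <= exp (- a).
Proof.
  replace (exp (- a)) with (exp (- s) * exp (s - a)) by (rewrite <- exp_plus; f_equal; ring).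
  apply Rmult_le_compat_l; [left; apply exp_pos|].
  pose proof (exp_ineq1_le (s - a)); lra.
Qed.

(* Jensen's inequality for the convex function [exp (- _)], via its tangent line at [s]; the
   missing mass [t - fsum q l] is charged at the maximal value 1. *)
Lemma fsum_exp_jensen {A : Type} (q u : A -> R) t s l :
  (forall a, 0 <= q a) -> fsum q l <= t -> fsum (fun a => q a * u a) l <= t * s ->
  t * exp (- s) <= (t - fsum q l) + fsum (fun a => q a * exp (- u a)) l.
Proof.
  intros Hq Hmass Hmean. set (E := exp (- s)).
  assert (HE : 0 < E) by apply exp_pos.
  assert (HE1 : E * (1 + s) <= 1)
    by (pose proof (exp_tangent s 0) as H; rewrite Ropp_0, exp_0, Rminus_0_r in H; exact H).
  assert (Hterm : fsum (fun a => E * ((1 + s) * q a - q a * u a)) l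
                  <= fsum (fun a => q a * exp (- u a)) l).
  { apply fsum_le; intros a _. pose proof (exp_tangent s (u a)) as Ha; fold E in Ha.
    pose proof (Hq a); nra. }
  rewrite fsum_scal, fsum_minus, fsum_scal in Hterm.
  assert (E * fsum (fun a => q a * u a) l <= E * (t * s)) by (apply Rmult_le_compat_l; lra).
  assert (0 <= (t - fsum q l) * (1 - E * (1 + s))) by (apply Rmult_le_pos; lra).
  nra.
Qed.

Lemma fsum_Un_cv {A : Type} (u : A -> nat -> R) (v : A -> R) l :
  (forall a, Un_cv (u a) (v a)) -> Un_cv (fun N => fsum (fun a => u a N) l) (fsum v l).
Proof.
  intros Hu; induction l as [|a l IH]; simpl; [apply Un_cv_const | apply CV_plus; auto].
Qed.

Lemma wterm_fin (q : Mem -> R) x a : wterm q x a <> EInf -> wterm q x a = EFin (q a * count a x).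
Proof.
  unfold wterm, count; destruct (a x); [reflexivity|].
  destruct (Req_EM_T (q a) 0) as [->|]; [rewrite Rmult_0_l; reflexivity | contradiction].
Qed.

Lemma weighting_inf (q : Mem -> R) t m x : has_sum q t -> 0 < q m -> m x = NInf -> weighting q x = EInf.
Proof.
  intros Hq Hm Hx. pose proof (has_sum_term_le q t m Hq).
  unfold weighting; rewrite (tsum_eq_of_has_sum q t Hq).
  destruct (Rlt_dec 0 t); [|lra]. unfold esum.
  destruct (excluded_middle_informative _) as [|Hnone]; [reflexivity|].
  exfalso; apply Hnone; exists m; unfold wterm; rewrite Hx.
  destruct (Req_EM_T (q m) 0); [lra | reflexivity].
Qed.

Lemma weighting_fin_bound (q : Mem -> R) t x k l : has_sum q t ->
  ER_le_natinf (weighting q x) (NFin k) -> NoDup l ->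
  fsum (fun a => q a * count a x) l <= t * INR k.
Proof.
  intros Hq Hw Hl. pose proof (has_sum_nonneg q t Hq).
  destruct (Req_dec t 0) as [Ht0|Ht0].
  - rewrite (fsum_ext _ (fun _ => 0)), fsum_0; [nra|]. intros a _.
    pose proof (has_sum_term_le q t a Hq); pose proof (proj1 Hq a).
    replace (q a) with 0 by lra; ring.
  - unfold weighting in Hw; rewrite (tsum_eq_of_has_sum q t Hq) in Hw.
    destruct (Rlt_dec 0 t); [|lra]. unfold esum in Hw.
    destruct (excluded_middle_informative _) as [|Hnone]; [contradiction|].
    destruct (excluded_middle_informative _) as [Hb|]; [|contradiction]. simpl in Hw.
    set (h := fun a => match wterm q x a with EFin r => r | EInf => 0 end) in *.
    assert (Hh : forall a, h a = q a * count a x).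
    { intros a; unfold h; rewrite wterm_fin; [reflexivity|].
      intros Ha; apply Hnone; exists a; exact Ha. }
    rewrite <- (fsum_ext h) by auto.
    apply Rle_trans with (tsum h); [apply (tsum_is_lub h Hb); exists l; auto|].
    apply Rmult_le_reg_r with (/ t); [apply Rinv_0_lt_compat; lra|].
    replace (t * INR k * / t) with (INR k) by (field; lra). exact Hw.
Qed.

Section CouplingColumn.
Variables (q : Mem -> R) (t : R) (m : Mem) (e : Var -> R).
Hypothesis q_sum : has_sum q t.
Hypothesis q_weighting : forall x, ER_le_natinf (weighting q x) (m x).
Hypothesis He : in_E e.

Lemma column_inf m1 x : 0 < q m1 -> m1 x = NInf -> m x = NInf.
Proof.
  intros Hm1 Hx. pose proof (q_weighting x) as Hw.
  rewrite (weighting_inf q t m1 x q_sum Hm1 Hx) in Hw.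
  destruct (m x); [contradiction | reflexivity].
Qed.

Lemma column_total_hazard N l : NoDup l ->
  (forall x, (x < N)%nat -> 0 < e x -> m x <> NInf) ->
  fsum (fun m1 => q m1 * total_hazard e m1 N) l <= t * total_hazard e m N.
Proof.
  intros Hl Hfin; unfold total_hazard.
  rewrite (fsum_ext _ (fun m1 => fsum (fun x => q m1 * (hazard e x * count m1 x)) (seq 0 N)))
    by (intros; rewrite fsum_scal; reflexivity).
  rewrite fsum_comm, <- fsum_scal. apply fsum_le; intros x Hx; apply in_seq in Hx.
  rewrite (fsum_ext _ (fun m1 => hazard e x * (q m1 * count m1 x))) by (intros; ring).
  rewrite fsum_scal.
  destruct (Req_dec (e x) 0) as [H0|H0]; [rewrite hazard_0 by exact H0; lra|].
  pose proof (q_weighting x) as Hw. unfold count at 2.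
  destruct (m x) as [k|] eqn:Em; [|exfalso; apply (Hfin x); [lia | pose proof (He x); lra | exact Em]].
  replace (t * (hazard e x * INR k)) with (hazard e x * (t * INR k)) by ring.
  apply Rmult_le_compat_l; [apply hazard_nonneg, He | apply (weighting_fin_bound q t x k l); auto].
Qed.

Lemma column_pprod_bound N l : NoDup l ->
  t * pprod (factor m e) N <= (t - fsum q l) + fsum (fun m1 => q m1 * pprod (factor m1 e) N) l.
Proof.
  intros Hl. pose proof (proj1 q_sum) as Hq.
  assert (Hmass : fsum q l <= t) by (apply has_sum_fsum_le; auto).
  destruct (classic (forall x, (x < N)%nat -> 0 < e x -> m x <> NInf)) as [Hfin|Hinf].
  - rewrite (pprod_factor_exp m e N He Hfin).
    rewrite (fsum_ext (fun m1 => q m1 * pprod (factor m1 e) N)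
                      (fun m1 => q m1 * exp (- total_hazard e m1 N))).
    + apply fsum_exp_jensen; auto. apply column_total_hazard; auto.
    + intros m1 _. destruct (Req_dec (q m1) 0) as [->|Hq1]; [ring|].
      rewrite pprod_factor_exp; auto. intros x Hx Hex Hm1x.
      apply (Hfin x Hx Hex), (column_inf m1 x); [pose proof (Hq m1); lra | exact Hm1x].
  - assert (exists x, (x < N)%nat /\ 0 < e x /\ m x = NInf) as [x [Hx [Hex Hmx]]].
    { apply NNPP; intros Hno; apply Hinf; intros x Hx Hex Hmx; apply Hno; eauto. }
    rewrite (pprod_zero (factor m e) N x Hx)
      by (unfold factor; rewrite Hmx; destruct (Req_EM_T (e x) 0); [lra | reflexivity]).
    assert (0 <= fsum (fun m1 => q m1 * pprod (factor m1 e) N) l); [|lra].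
    apply fsum_nonneg; intros m1 _. pose proof (Hq m1).
    pose proof (pprod_range (factor m1 e) (fun x => factor_range m1 e x He) N). nra.
Qed.

Lemma column_dda_bound l : NoDup l -> fsum (fun m1 => q m1 * dda m1 e) l <= t * dda m e.
Proof.
  intros Hl; unfold dda.
  rewrite (fsum_ext _ (fun m1 => q m1 - q m1 * infprod (factor m1 e))) by (intros; ring).
  rewrite fsum_minus.
  enough (t * infprod (factor m e)
          <= (t - fsum q l) + fsum (fun m1 => q m1 * infprod (factor m1 e)) l) by lra.
  apply Rle_cv_lim with (Un := fun N => t * pprod (factor m e) N)
    (Vn := fun N => (t - fsum q l) + fsum (fun m1 => q m1 * pprod (factor m1 e) N) l).
  - intros N; apply column_pprod_bound, Hl.
  - apply CV_mult; [apply Un_cv_const | apply infprod_factor_cv, He].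
  - apply CV_plus; [apply Un_cv_const|]. apply fsum_Un_cv; intros m1.
    apply CV_mult; [apply Un_cv_const | apply infprod_factor_cv, He].
Qed.

End CouplingColumn.

Lemma pda_terms_fsum_le p e l : is_dist p -> in_E e -> NoDup l ->
  fsum (fun m => p m * dda m e) l <= 1.
Proof.
  intros Hp He Hl. apply Rle_trans with (fsum p l); [|apply has_sum_fsum_le; auto].
  apply fsum_le; intros m _. pose proof (dda_range m e He); pose proof (proj1 Hp m); nra.
Qed.

Lemma pda_has_sum p e : is_dist p -> in_E e -> has_sum (fun m => p m * dda m e) (pda p e).
Proof.
  intros Hp He. apply has_sum_tsum with 1; [|intros; apply pda_terms_fsum_le; auto].
  intros m; pose proof (dda_range m e He); pose proof (proj1 Hp m); nra.
Qed.

Lemma pda_monotone_dist p p' e : in_E e -> dist_le p p' -> pda p e <= pda p' e.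
Proof.
  intros He [Hp [Hp' [w [[_ [Hrow Hcol]] Hweight]]]].
  apply (has_sum_le _ _ _ (pda_has_sum p e Hp He)); intros l Hl.
  assert (Hcols : has_sum (fun m' => fsum (fun m1 => dda m1 e * w (m1, m')) l)
                          (fsum (fun m1 => dda m1 e * p m1) l)).
  { apply has_sum_fsum; intros m1. apply has_sum_scal; [apply dda_range, He | apply Hrow]. }
  rewrite (fsum_ext _ (fun m1 => dda m1 e * p m1)) by (intros; ring).
  apply (has_sum_le _ _ _ Hcols); intros l' Hl'.
  apply Rle_trans with (fsum (fun m' => p' m' * dda m' e) l');
    [|apply (has_sum_fsum_le _ _ _ (pda_has_sum p' e Hp' He) Hl')].
  apply fsum_le; intros m' _.
  rewrite (fsum_ext _ (fun m1 => w (m1, m') * dda m1 e)) by (intros; ring).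
  apply (column_dda_bound (fun m1 => w (m1, m')) (p' m') m' e); auto.
Qed.

Lemma pda_monotone_e p e e' : is_dist p -> in_E e -> in_E e' -> E_le e e' ->
  pda p e <= pda p e'.
Proof.
  intros Hp He He' Hle.
  apply (has_sum_le _ _ _ (pda_has_sum p e Hp He)); intros l Hl.
  apply Rle_trans with (fsum (fun m => p m * dda m e') l);
    [|apply (has_sum_fsum_le _ _ _ (pda_has_sum p e' Hp He') Hl)].
  apply fsum_le; intros m _.
  apply Rmult_le_compat_l; [apply (proj1 Hp) | apply dda_monotone; auto].
Qed.

Lemma in_D_is_dist P p : in_D P -> P p -> is_dist p.
Proof. intros [_ Hdown] Hp. apply Hdown in Hp as [p' [_ [Hdist _]]]; exact Hdist. Qed.

Lemma da_is_lub P e : in_D P -> in_E e ->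
  is_lub (fun r => exists p, P p /\ r = pda p e) (da P e).
Proof.
  intros HP He. apply Rsup_is_lub.
  - exists 1; intros r [p [Hp ->]].
    apply (has_sum_le _ _ _ (pda_has_sum p e (in_D_is_dist P p HP Hp) He)).
    intros; apply pda_terms_fsum_le; eauto using in_D_is_dist.
  - destruct HP as [[p Hp] _]; eauto.
Qed.

Theorem proposition5 (P P' : (Mem -> R) -> Prop) (e e' : Var -> R) :
  in_D P -> in_D P' -> in_E e -> in_E e' ->
  (D_le P P' -> da P e <= da P' e) /\ (E_le e e' -> da P e <= da P e').
Proof.
  intros HP HP' He He'. split; intros Hle.
  - apply (is_lub_le_of_dominated _ _ _ _ (da_is_lub P e HP He) (da_is_lub P' e HP' He)).
    intros r [p [Hp ->]]. destruct (Hle p Hp) as [p' [Hp' Hpp']].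
    exists (pda p' e); split; [eauto | apply pda_monotone_dist; auto].
  - apply (is_lub_le_of_dominated _ _ _ _ (da_is_lub P e HP He) (da_is_lub P e' HP He')).
    intros r [p [Hp ->]].
    exists (pda p e'); split; [eauto | apply pda_monotone_e; eauto using in_D_is_dist].
Qed.
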